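(* Let $m\ge1$, $\alpha>0$, let $A$ be a finite set of bilinear maps $\Phi:\mathbb{R}^m\times\mathbb{R}^m\to\mathbb{R}^m$ each of whose coordinates is a bilinear form with nonnegative coefficients, and let $\mathbf v\in\mathbb{R}_{\ge0}^m$. Let $F\subseteq\mathbb{R}^m\times\mathbb{N}$ be the smallest set such that $(\mathbf v,1)\in F$ and, whenever $(\mathbf w,i),(\mathbf u,j)\in F$ and $\Phi\in A$, also $(\Phi(\mathbf w,\mathbf u),i+j)\in F$. Suppose there is a bounded set $X\subseteq\mathbb{R}_{\ge0}^m$ such that $\frac{1}{\alpha}\mathbf v\in\operatorname{conv}_\le(X)$ and, for all $\mathbf x,\mathbf x'\in X$ and all $\Phi\in A$, $\Phi(\mathbf x,\mathbf x')\in\operatorname{conv}_\le(X)$. Then for every $\mathbf p\in\mathbb{R}_{\ge0}^m$ and every integer $n$, $$\max\{|\mathbf p\cdot\mathbf u| : (\mathbf u,n)\in F\}\le \alpha^n\max_{\mathbf x\in X}|\mathbf p\cdot\mathbf x| .$$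
   Context: For vectors $\mathbf x,\mathbf x'\in\mathbb{R}^m$, $\mathbf x\le\mathbf x'$ means coordinatewise inequality. For $X\subseteq\mathbb{R}_{\ge0}^m$, $\operatorname{conv}(X)$ is the convex hull of $X$ and $\operatorname{conv}_\le(X)=\{\mathbf x\in\mathbb{R}_{\ge0}^m:\ \exists\,\mathbf x'\in\operatorname{conv}(X),\ \mathbf x\le \mathbf x'\}$. *)

From HB Require Import structures.
From mathcomp Require Import all_boot all_order all_algebra.
Set Implicit Arguments. Unset Strict Implicit. Unset Printing Implicit Defensive.
Import Order.TTheory GRing.Theory Num.Theory.
Local Open Scope ring_scope.

Section Defs.
Variables (R : realFieldType) (m : nat).

Definition nonneg (x : 'rV[R]_m) : Prop := forall i, 0 <= x ord0 i.

Definition le_vec (x x' : 'rV[R]_m) : Prop := forall i, x ord0 i <= x' ord0 i.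

Definition dot (p x : 'rV[R]_m) : R := \sum_(i < m) p ord0 i * x ord0 i.

Definition conv (X : 'rV[R]_m -> Prop) (y : 'rV[R]_m) : Prop :=
  exists (k : nat) (lam : 'I_k -> R) (xs : 'I_k -> 'rV[R]_m),
    [/\ forall j, 0 <= lam j,
        \sum_(j < k) lam j = 1,
        forall j, X (xs j) &
        y = \sum_(j < k) lam j *: xs j].

Definition conv_le (X : 'rV[R]_m -> Prop) (y : 'rV[R]_m) : Prop :=
  nonneg y /\ exists y', conv X y' /\ le_vec y y'.

Definition bounded (X : 'rV[R]_m -> Prop) : Prop :=
  exists B : R, forall x, X x -> forall i, `|x ord0 i| <= B.

Definition bilin (c : 'I_m -> 'I_m -> 'I_m -> R) (w u : 'rV[R]_m) : 'rV[R]_m :=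
  \row_(k < m) \sum_(i < m) \sum_(j < m) c k i j * w ord0 i * u ord0 j.

Inductive inF (I : Type) (Phi : I -> 'I_m -> 'I_m -> 'I_m -> R) (v : 'rV[R]_m)
  : 'rV[R]_m -> nat -> Prop :=
| inF_base : inF Phi v v 1
| inF_step : forall (a : I) w i u j,
    inF Phi v w i -> inF Phi v u j -> inF Phi v (bilin (Phi a) w u) (i + j).

End Defs.

From HB Require Import structures.
From mathcomp Require Import all_boot all_order all_algebra.
Import Order.TTheory GRing.Theory Num.Theory.
Local Open Scope ring_scope.
Set Implicit Arguments. Unset Strict Implicit.

(* Nonnegative linear functionals x |-> q . x are monotone for
   the coordinatewise order and convex, so an upper bound s for q . x on X
   is also an upper bound on conv_<=(X).  For a bilinear map Phi with
   nonnegative coefficients, q . Phi(w, u) equals q' . u for the "partially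
   evaluated" functional q' = q . Phi(w, _), and symmetrically equals
   q'' . w with q'' = q . Phi(_, u); both are nonnegative when q, w, u are.
   We then prove, by induction on the derivation of (u, n) in F, that u is
   nonnegative and that q . u <= alpha^n * s for EVERY nonnegative q bounded
   by s on X: the base case is the hypothesis v/alpha in conv_<=(X), and the
   step for Phi(w, u) bounds q . Phi(x, x') on X x X using the closure
   hypothesis, then transfers the bound first to w (induction hypothesis
   for w applied to q . Phi(_, x')) and then to u (induction hypothesis for
   u applied to q . Phi(w, _)).  The theorem is the case q = p, using
   |p . u| = p . u since p and u are nonnegative. *)

Section DotProduct.
Variables (R : realFieldType) (m : nat).
Implicit Types (q y : 'rV[R]_m) (X : 'rV[R]_m -> Prop).

Lemma dot_le q y (y' : 'rV[R]_m) : nonneg q -> le_vec y y' -> dot q y <= dot q y'.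
Proof. by move=> hq hy; apply: ler_sum => i _; apply: ler_wpM2l. Qed.

Lemma dot_ge0 q y : nonneg q -> nonneg y -> 0 <= dot q y.
Proof. by move=> hq hy; apply: sumr_ge0 => i _; apply: mulr_ge0. Qed.

Lemma dotZ q a y : dot q (a *: y) = a * dot q y.
Proof.
rewrite /dot mulr_sumr; apply: eq_bigr => i _.
by rewrite mxE mulrCA.
Qed.

Lemma dot_sum q k (lam : 'I_k -> R) (xs : 'I_k -> 'rV[R]_m) :
  dot q (\sum_(j < k) lam j *: xs j) = \sum_(j < k) lam j * dot q (xs j).
Proof.
rewrite /dot; under eq_bigr => i _ do rewrite summxE mulr_sumr.
rewrite exchange_big /=; apply: eq_bigr => j _.
by rewrite mulr_sumr; apply: eq_bigr => i _; rewrite mxE mulrCA.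
Qed.

Lemma dot_conv X q y s :
  (forall x, X x -> dot q x <= s) -> conv X y -> dot q y <= s.
Proof.
move=> hs [k [lam [xs [hlam hsum hX ->]]]]; rewrite dot_sum.
have -> : s = \sum_(j < k) lam j * s by rewrite -mulr_suml hsum mul1r.
by apply: ler_sum => j _; apply: ler_wpM2l => //; apply: hs.
Qed.

Lemma dot_conv_le X q y s : nonneg q ->
  (forall x, X x -> dot q x <= s) -> conv_le X y -> dot q y <= s.
Proof.
move=> hq hs [_ [y' [hconv hle]]].
exact: le_trans (dot_le hq hle) (dot_conv hs hconv).
Qed.

End DotProduct.

Section BilinearTransfer.
Variables (R : realFieldType) (m : nat) (c : 'I_m -> 'I_m -> 'I_m -> R).
Hypothesis c_ge0 : forall k i j, 0 <= c k i j.
Implicit Types (q w u : 'rV[R]_m).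

(* The functionals u |-> q . c(w, u) and w |-> q . c(w, u). *)
Definition eval_left q w : 'rV[R]_m :=
  \row_j \sum_(k < m) \sum_(i < m) q ord0 k * c k i j * w ord0 i.

Definition eval_right q u : 'rV[R]_m :=
  \row_i \sum_(k < m) \sum_(j < m) q ord0 k * c k i j * u ord0 j.

Lemma dot_bilinE q w u : dot q (bilin c w u) =
  \sum_(k < m) \sum_(i < m) \sum_(j < m) q ord0 k * c k i j * w ord0 i * u ord0 j.
Proof.
apply: eq_bigr => k _; rewrite mxE mulr_sumr; apply: eq_bigr => i _.
by rewrite mulr_sumr; apply: eq_bigr => j _; rewrite !mulrA.
Qed.

Lemma dot_eval_left q w u : dot q (bilin c w u) = dot (eval_left q w) u.
Proof.
rewrite dot_bilinE (eq_bigr _ (fun k _ => exchange_big _ _ _ _ _ _)) /=.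
rewrite exchange_big; apply: eq_bigr => j _.
by rewrite mxE mulr_suml; apply: eq_bigr => k _; rewrite mulr_suml.
Qed.

Lemma dot_eval_right q w u : dot q (bilin c w u) = dot (eval_right q u) w.
Proof.
rewrite dot_bilinE exchange_big; apply: eq_bigr => i _.
rewrite mxE mulr_suml; apply: eq_bigr => k _; rewrite mulr_suml.
by apply: eq_bigr => j _; rewrite mulrAC.
Qed.

Lemma bilin_nonneg w u : nonneg w -> nonneg u -> nonneg (bilin c w u).
Proof.
move=> hw hu k; rewrite mxE; apply: sumr_ge0 => i _; apply: sumr_ge0 => j _.
by rewrite !mulr_ge0.
Qed.

Lemma eval_left_nonneg q w : nonneg q -> nonneg w -> nonneg (eval_left q w).
Proof.
move=> hq hw j; rewrite mxE; apply: sumr_ge0 => k _; apply: sumr_ge0 => i _.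
by rewrite !mulr_ge0.
Qed.

Lemma eval_right_nonneg q u : nonneg q -> nonneg u -> nonneg (eval_right q u).
Proof.
move=> hq hu i; rewrite mxE; apply: sumr_ge0 => k _; apply: sumr_ge0 => j _.
by rewrite !mulr_ge0.
Qed.

End BilinearTransfer.

Section GrowthBound.
Variables (R : realFieldType) (m : nat) (alpha : R) (I : Type).
Variables (Phi : I -> 'I_m -> 'I_m -> 'I_m -> R) (v : 'rV[R]_m).
Variable X : 'rV[R]_m -> Prop.
Hypotheses (alpha_gt0 : 0 < alpha) (Phi_ge0 : forall a k i j, 0 <= Phi a k i j).
Hypotheses (v_ge0 : nonneg v) (X_ge0 : forall x, X x -> nonneg x).
Hypothesis v_in_X : conv_le X (alpha^-1 *: v).
Hypothesis X_closed : forall a x x', X x -> X x' -> conv_le X (bilin (Phi a) x x').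

Definition bounded_on (q : 'rV[R]_m) (s : R) : Prop :=
  forall x, X x -> dot q x <= s.

Lemma inF_dot_bound n u : inF Phi v u n -> nonneg u /\
  forall q s, nonneg q -> bounded_on q s -> dot q u <= alpha ^+ n * s.
Proof.
elim=> {n u} [|a w i u j _ [w_ge0 IHw] _ [u_ge0 IHu]].
  split=> // q s hq hs.
  have := dot_conv_le hq hs v_in_X.
  by rewrite dotZ expr1 ler_pdivrMl // mulrC.
split; first exact: bilin_nonneg.
move=> q s hq hs.
have bound_XX x x' : X x -> X x' -> dot q (bilin (Phi a) x x') <= s.
  by move=> hx hx'; apply: dot_conv_le hq hs (X_closed a hx hx').
have bound_w x' : X x' -> dot q (bilin (Phi a) w x') <= alpha ^+ i * s.
  move=> hx'; rewrite dot_eval_right; apply: IHw.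
    by apply: eval_right_nonneg => //; apply: X_ge0.
  by move=> x hx; rewrite -dot_eval_right; apply: bound_XX.
rewrite dot_eval_left exprD -mulrA mulrC -mulrA; apply: IHu.
  exact: eval_left_nonneg.
by move=> x' hx'; rewrite -dot_eval_left mulrC; apply: bound_w.
Qed.

End GrowthBound.

Theorem mainTheorem2 (R : realFieldType) (m : nat) (hm : (0 < m)%N)
  (alpha : R) (halpha : 0 < alpha)
  (I : finType) (Phi : I -> 'I_m -> 'I_m -> 'I_m -> R)
  (hPhi : forall a k i j, 0 <= Phi a k i j)
  (v : 'rV[R]_m) (hv : nonneg v)
  (X : 'rV[R]_m -> Prop) (hXnn : forall x, X x -> nonneg x) (hXb : bounded X)
  (hvX : conv_le X (alpha^-1 *: v))
  (hcl : forall a x x', X x -> X x' -> conv_le X (bilin (Phi a) x x')) :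
  forall p : 'rV[R]_m, nonneg p ->
  forall (s : R), (forall x, X x -> `|dot p x| <= s) ->
  forall (n : nat) (u : 'rV[R]_m), inF Phi v u n ->
    `|dot p u| <= alpha ^+ n * s.
Proof.
move=> p hp s hs n u hu.
have [u_ge0 bound] := inF_dot_bound halpha hPhi hv hXnn hvX hcl hu.
rewrite ger0_norm; last exact: dot_ge0.
by apply: bound => // x hx; apply: le_trans (hs x hx); apply: ler_norm.
Qed.
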